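(* For every integer $n\ge 3$, $A'_n\equiv 0\pmod{24}$.
   Context: For $m\in\mathbb{N}$, $A_m=\sum_{k=0}^m\binom{m}{k}^2\binom{m+k}{k}^2$ (Apéry numbers), and $A'_n=\sum_{k=0}^n\binom{n}{k}A_k$ is its binomial transform. *)

From mathcomp Require Import all_boot.

Definition apery (m : nat) : nat :=
  \sum_(0 <= k < m.+1) ('C(m, k) ^ 2 * 'C(m + k, k) ^ 2).

Definition apery' (n : nat) : nat :=
  \sum_(0 <= k < n.+1) ('C(n, k) * apery k).

(* For a prime p the summands
   'C(n, k)^2 'C(n + k, k)^2 of A_n, and hence those of A'_n, factor modulo p
   along the base-p digits of n and k (a carry in n + k kills both sides), so
   A_(pm+r) = A_m A_r and A'_(pm+r) = A'_m A'_r (mod p) for r < p.  As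
   A'_1 = 6 and A'_2 = 84, induction on base-3 digits gives 3 | A'_n for n > 0.
   For the factor 8: 'C(k, j) 'C(k + j, j) is even for j > 0, so
   A_k = 2 D_k - 1 (mod 8) with D_k the central Delannoy number; the formula
   D_k = sum_i 'C(k, i)^2 2^(k-i) gives D_k = 2k + 1 (mod 4), hence
   A_k = 4k + 1 (mod 8) and A'_n = 2^n + n 2^(n+1) = 0 (mod 8) for n >= 3. *)

From mathcomp Require Import all_boot zify.

Set Implicit Arguments.
Unset Strict Implicit.
Unset Printing Implicit Defensive.

Lemma eqmodD d a b c e : a = b %[mod d] -> c = e %[mod d] -> a + c = b + e %[mod d].
Proof. by move=> ab ce; rewrite -modnDm ab ce modnDm. Qed.

Lemma eqmodM d a b c e : a = b %[mod d] -> c = e %[mod d] -> a * c = b * e %[mod d].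
Proof. by move=> ab ce; rewrite -modnMm ab ce modnMm. Qed.

Lemma eqmod_sum d m n (F G : nat -> nat) :
  (forall i, m <= i < n -> F i = G i %[mod d]) ->
  \sum_(m <= i < n) F i = \sum_(m <= i < n) G i %[mod d].
Proof.
move=> FG; rewrite -modn_summ -[RHS]modn_summ; congr (_ %% _).
by apply: eq_big_nat => i /FG.
Qed.

Lemma mul2_sqr_mod4 x : 2 * x ^ 2 = 2 * x %[mod 4].
Proof. by rewrite -[4]/(2 * 2) -!muln_modr !modn2 oddX. Qed.

Lemma sqr_even_mod8 a : 2 %| a -> a ^ 2 = 2 * a %[mod 8].
Proof.
case/dvdnP=> c ->; rewrite expnMn mulnC (mulnC c) mulnA -[2 ^ 2]/4 -[2 * 2]/4.
by rewrite -[8]/(4 * 2) -!muln_modr !modn2 oddX.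
Qed.

Lemma sum_widen_zero n N (f : nat -> nat) : n <= N ->
  (forall i, n <= i < N -> f i = 0) ->
  \sum_(0 <= i < n) f i = \sum_(0 <= i < N) f i.
Proof.
move=> leNn f0; rewrite (big_cat_nat (leq0n n) leNn) /= [X in _ + X]big1_seq ?addn0 //.
by move=> i /andP[_]; rewrite mem_index_iota; apply: f0.
Qed.

Lemma sum_bin n : \sum_(0 <= i < n.+1) 'C(n, i) = 2 ^ n.
Proof.
by rewrite -[2]/(1 + 1) expnDn big_mkord; apply: eq_bigr => i _; rewrite !exp1n !muln1.
Qed.

Lemma sum_index_mul_bin n : \sum_(0 <= k < n.+1) k * 'C(n, k) = n * 2 ^ n.-1.
Proof.
case: n => [|n]; first by rewrite big_nat1.
rewrite big_nat_recl // mul0n add0n /= -sum_bin big_distrr /=.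
by apply: eq_bigr => k _; rewrite -mul_bin_diag.
Qed.

Lemma mul_bin_bin n a b : b <= a ->
  'C(n, a) * 'C(a, b) = 'C(n, b) * 'C(n - b, a - b).
Proof.
move=> leba; have [ltna|lean] := ltnP n a.
  rewrite (bin_small ltna); have [ltnb|lebn] := ltnP n b.
    by rewrite (bin_small ltnb).
  by rewrite (@bin_small (n - b)) ?muln0 //; lia.
apply/eqP; rewrite -(@eqn_pmul2r (b`! * (a - b)`! * (n - a)`!)) ?muln_gt0 ?fact_gt0 //.
have -> : 'C(n, a) * 'C(a, b) * (b`! * (a - b)`! * (n - a)`!) = n`!.
  by rewrite -(bin_fact lean) -(bin_fact leba); lia.
have lebn : b <= n by apply: leq_trans lean.
have leab : a - b <= n - b by lia.
rewrite -(bin_fact lebn) -(bin_fact leab) (_ : n - b - (a - b) = n - a); last by lia.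
by apply/eqP; lia.
Qed.

Lemma sum_mul_bin_bin k i : i <= k ->
  \sum_(0 <= j < k.+1) 'C(k, j) * 'C(j, i) = 'C(k, i) * 2 ^ (k - i).
Proof.
move=> leik; rewrite -sum_bin big_distrr /=.
rewrite (big_cat_nat (leq0n i) (leqW leik)) /= big1_seq ?add0n; last first.
  move=> j /andP[_]; rewrite mem_index_iota => /andP[_ ltji].
  by rewrite (bin_small ltji) muln0.
rewrite -{1}(add0n i) big_addn subSn //; apply: eq_big_nat => j /andP[_ ltj].
by rewrite mul_bin_bin ?leq_addl // addnK.
Qed.

Lemma bin_addE k j : 'C(k + j, j) = \sum_(0 <= i < k.+1) 'C(k, i) * 'C(j, i).
Proof.
rewrite -Vandermonde -(big_mkord xpredT (fun i => 'C(k, i) * 'C(j, j - i))).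
rewrite (eq_big_nat _ _ (F2 := fun i => 'C(k, i) * 'C(j, i))); last first.
  by move=> i /andP[_ ltij]; rewrite bin_sub.
rewrite (@sum_widen_zero _ (k + j).+1) ?ltnS ?leq_addl //; last first.
  by move=> i /andP[ltji _]; rewrite (bin_small ltji) muln0.
rewrite [RHS](@sum_widen_zero _ (k + j).+1) ?ltnS ?leq_addr //.
by move=> i /andP[ltki _]; rewrite (bin_small ltki).
Qed.

Lemma central_bin_even j : 0 < j -> 2 %| 'C(j.*2, j).
Proof.
case: j => [|j] // _.
have -> : j.+1.*2 = (j + j).+2 by rewrite -addnn addnS.
have lejj : j.+1 <= (j + j).+1 by rewrite ltnS leq_addr.
rewrite binS -(bin_sub lejj) subSS addnK addnn -muln2.
by rewrite dvdn_mull.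
Qed.

Section Lucas.

Variable p : nat.
Hypothesis p_pr : prime p.

Lemma bin_addp_lt n k : k < p -> 'C(p + n, k) = 'C(n, k) %[mod p].
Proof.
elim: n k => [|n IHn] [|k] ltkp; rewrite ?bin0 //.
  by rewrite addn0 bin0n; apply/eqP; rewrite mod0n; apply: prime_dvd_bin.
by rewrite addnS !binS (eqmodD (IHn _ _) (IHn _ _)) // ltnW.
Qed.

Lemma bin_addp_addp n k : 'C(p + n, p + k) = 'C(n, p + k) + 'C(n, k) %[mod p].
Proof.
have p_gt0 := prime_gt0 p_pr.
have pS_gt0 j : 0 < p + j by rewrite addn_gt0 p_gt0.
have binS_pred m j : 0 < j -> 'C(m.+1, j) = 'C(m, j) + 'C(m, j.-1).
  by move=> j_gt0; rewrite -[in LHS](prednK j_gt0) binS prednK.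
elim: n k => [|n IHn] k.
  rewrite addn0 !bin0n; case: k => [|k].
    by rewrite addn0 binn eqn0Ngt p_gt0.
  by rewrite addnS bin_small // ltnS leq_addr.
rewrite addnS binS_pred // [in RHS]binS_pred //.
case: k => [|k].
  rewrite (eqmodD (IHn 0) (bin_addp_lt _ _)) ?addn0 ?ltn_predL // !bin0.
  by congr (_ %% _); lia.
rewrite addnS /= binS -addnS (eqmodD (IHn _) (IHn _)).
by congr (_ %% _); lia.
Qed.

Theorem lucas a b r s : r < p -> s < p ->
  'C(p * a + r, p * b + s) = 'C(a, b) * 'C(r, s) %[mod p].
Proof.
move=> ltrp ltsp; elim: a b => [|a IHa] [|b].
- by rewrite !muln0 !add0n bin0 mul1n.
- by rewrite muln0 add0n bin0n mul0n bin_small // mulnS -addnA ltn_addr.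
- by move: (IHa 0); rewrite !muln0 !add0n mulnS -addnA bin_addp_lt // !bin0.
- rewrite !mulnS -!addnA bin_addp_addp addnA -mulnS.
  by rewrite (eqmodD (IHa _) (IHa _)) binS mulnDl.
Qed.

End Lucas.

Section LucasSums.

Variables (p : nat) (F : nat -> nat -> nat).
Hypothesis F_small : forall n k, n < k -> F n k = 0.
Hypothesis F_lucas : forall m b r s, r < p -> s < p ->
  F (p * m + r) (p * b + s) = F m b * F r s %[mod p].

Lemma sum_lucas m r : r < p ->
  \sum_(0 <= k < (p * m + r).+1) F (p * m + r) k
    = (\sum_(0 <= b < m.+1) F m b) * (\sum_(0 <= s < r.+1) F r s) %[mod p].
Proof.
move=> ltrp.
have widen n N : n < N -> \sum_(0 <= k < n.+1) F n k = \sum_(0 <= k < N) F n k.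
  by move=> ltnN; apply: sum_widen_zero => // k /andP[ltnk _]; apply: F_small.
rewrite (@widen r p) // (@widen _ (m.+1 * p)); last by rewrite mulSnr mulnC ltn_add2l.
rewrite big_nat_mul big_distrl /=; apply: eqmod_sum => b _.
rewrite -[b * p]add0n big_addn mulSn addnK big_distrr /=.
by apply: eqmod_sum => s /andP[_ ltsp]; rewrite [s + _]addnC [b * p]mulnC F_lucas.
Qed.

End LucasSums.

Definition apery_term n k := 'C(n, k) * 'C(n + k, k).

Lemma aperyE n : apery n = \sum_(0 <= k < n.+1) apery_term n k ^ 2.
Proof. by apply: eq_bigr => k _; rewrite expnMn. Qed.

Lemma apery_term_small n k : n < k -> apery_term n k = 0.
Proof. by move=> ltnk; rewrite /apery_term bin_small. Qed.

Section AperyLucas.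

Variable p : nat.
Hypothesis p_pr : prime p.

Lemma apery_term_lucas m b r s : r < p -> s < p ->
  apery_term (p * m + r) (p * b + s) = apery_term m b * apery_term r s %[mod p].
Proof.
move=> ltrp ltsp; rewrite /apery_term.
have [ltrs|lesr] := ltnP r s.
  by rewrite -modnMml lucas // (bin_small ltrs) !(muln0, mul0n, mod0n).
have [ltrsp|lepr] := ltnP (r + s) p.
  rewrite (_ : p * m + r + (p * b + s) = p * (m + b) + (r + s)); last by lia.
  by rewrite (eqmodM (lucas _ _ _ _ _) (lucas _ _ _ _ _)) // mulnACA.
have [u Drs ltus] : exists2 u, r + s = p + u & u < s.
  by exists (r + s - p); lia.
have ltup : u < p := ltn_trans ltus ltsp.
have carry c d : p %| 'C(p * c + u, p * d + s).
  by rewrite /dvdn lucas // (bin_small ltus) muln0 mod0n.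
rewrite (_ : p * m + r + (p * b + s) = p * (m + b).+1 + u); last by lia.
have := carry 1 0; rewrite muln1 muln0 add0n -Drs => carry_rs.
by rewrite (eqP (dvdn_mull _ (carry _ _))) (eqP (dvdn_mull _ (dvdn_mull _ carry_rs))).
Qed.

Lemma apery_lucas m r : r < p -> apery (p * m + r) = apery m * apery r %[mod p].
Proof.
move=> ltrp; rewrite !aperyE.
apply: (@sum_lucas p (fun n k => apery_term n k ^ 2)) => //
  [n k ltnk | m' b r' s ltr'p ltsp].
  by rewrite apery_term_small.
by rewrite -modnXm apery_term_lucas // modnXm expnMn.
Qed.

Lemma apery'_lucas m r : r < p -> apery' (p * m + r) = apery' m * apery' r %[mod p].
Proof.
move=> ltrp; apply: (@sum_lucas p (fun n k => 'C(n, k) * apery k)) => //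
  [n k ltnk | m' b r' s ltr'p ltsp].
  by rewrite bin_small.
by rewrite (eqmodM (lucas _ _ _ _ _) (apery_lucas _ _)) // mulnACA.
Qed.

End AperyLucas.

Lemma apery'1 : apery' 1 = 6.
Proof. by rewrite /apery' /apery unlock. Qed.

Lemma apery'2 : apery' 2 = 84.
Proof. by rewrite /apery' /apery unlock. Qed.

Lemma dvd3_apery' n : 0 < n -> 3 %| apery' n.
Proof.
elim/ltn_ind: n => n IHn n_gt0.
rewrite /dvdn (divn_eq n 3) mulnC apery'_lucas ?ltn_pmod // -/(dvdn 3 _).
have : n %% 3 < 3 by rewrite ltn_pmod.
case En: (n %% 3) => [|[|[|]]] // _.
- by rewrite dvdn_mulr // IHn; lia.
- by rewrite dvdn_mull // apery'1.
- by rewrite dvdn_mull // apery'2.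
Qed.

Lemma apery_termE k j : apery_term k j = 'C(k + j, j.*2) * 'C(j.*2, j).
Proof.
by rewrite mul_bin_bin -addnn ?leq_addr // !addnK /apery_term mulnC.
Qed.

Lemma apery_term_n0 n : apery_term n 0 = 1.
Proof. by rewrite /apery_term !bin0. Qed.

Lemma apery_term_even k j : 0 < j -> 2 %| apery_term k j.
Proof. by move=> j_gt0; rewrite apery_termE dvdn_mull ?central_bin_even. Qed.

Definition delannoy k := \sum_(0 <= j < k.+1) apery_term k j.

Lemma delannoyE k : delannoy k = \sum_(0 <= i < k.+1) 'C(k, i) ^ 2 * 2 ^ (k - i).
Proof.
rewrite /delannoy /apery_term.
under eq_bigr do rewrite bin_addE big_distrr /=.
rewrite exchange_big /=; apply: eq_big_nat => i /andP[_ ltik].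
rewrite -mulnA -sum_mul_bin_bin // big_distrr /=.
by apply: eq_bigr => j _; rewrite mulnCA.
Qed.

Lemma delannoy_mod4 k : delannoy k = (2 * k).+1 %[mod 4].
Proof.
rewrite delannoyE; case: k => [|k]; first by rewrite big_nat1.
rewrite !big_nat_recr //= subnn binn binSn subSn // subnn.
have dvd4_sum : 4 %| \sum_(0 <= i < k) 'C(k.+1, i) ^ 2 * 2 ^ (k.+1 - i).
  rewrite big_seq; apply: dvdn_sum => i; rewrite mem_index_iota => /andP[_ ltik].
  rewrite (_ : k.+1 - i = (k.+1 - i - 2) + 2); last by lia.
  by apply: dvdn_mull; rewrite expnD dvdn_mull.
rewrite -addnA -modnDml (eqP dvd4_sum) add0n expn1 mulnC -modnDml mul2_sqr_mod4.
by rewrite modnDml addn1.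
Qed.

Lemma apery_mod8 k : apery k = (4 * k).+1 %[mod 8].
Proof.
have apery_delannoy : apery k + 1 = 2 * delannoy k %[mod 8].
  rewrite aperyE /delannoy !big_nat_recl // apery_term_n0 addnAC mulnDr big_distrr /=.
  apply: eqmodD => //.
  by apply: eqmod_sum => j _; rewrite sqr_even_mod8 ?apery_term_even.
apply/eqP; rewrite -(eqn_modDr 1); apply/eqP.
rewrite apery_delannoy -[8]/(2 * 4) -!muln_modr delannoy_mod4 muln_modr.
by congr (_ %% _); lia.
Qed.

Lemma dvd8_apery' n : 3 <= n -> 8 %| apery' n.
Proof.
move=> len3; rewrite /dvdn /apery'.
rewrite (eqmod_sum (G := fun k => 'C(n, k) + 4 * (k * 'C(n, k)))); last first.
  by move=> k _; rewrite -modnMmr apery_mod8 modnMmr; congr (_ %% _); lia.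
rewrite big_split -big_distrr /= sum_bin sum_index_mul_bin -/(dvdn 8 _).
case: n len3 => [|[|[|m]]] // _.
rewrite (_ : 2 ^ m.+3 + 4 * (m.+3 * 2 ^ m.+2) = 8 * (2 ^ m + m.+3 * 2 ^ m.+1)).
  exact: dvdn_mulr.
by rewrite !expnS; lia.
Qed.

Theorem lemma4p2 (n : nat) : 3 <= n -> apery' n = 0 %[mod 24].
Proof.
move=> len3; apply/eqP; rewrite mod0n -/(dvdn 24 _) (@Gauss_dvd 3 8) //.
by rewrite dvd3_apery' ?dvd8_apery' // (leq_trans _ len3).
Qed.
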